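(* Let $\mathcal{A}$ be an order--invariant oblivious streaming algorithm that, for any $\epsilon\in(0,1)$ and $\delta\in(0,1)$, uses $M(\epsilon,\delta)$ space and, on any fixed stream of at most $m$ updates, outputs a correct solution to the $(f,\epsilon)$--estimation problem with probability at least $1-\delta$. Then for any $\epsilon\in(0,1)$ and $\delta\in(0,1)$ there is a robust streaming algorithm for the $(f,\epsilon)$--estimation problem in the $\tau$--Stream Adversary Model that succeeds with probability at least $1-\delta$ and uses $M(\epsilon,\delta/m^\tau)$ space. The space of this robust algorithm can also be bounded by $O(\tau\log m+\log(1/\delta))\cdot M(\epsilon,1/10)$.
   Context: Fix $n,m$, an integer $\alpha\ge 2$ and $f:\mathbb{Z}^n\to\{0\}\cup[1,\alpha]$. For $x,y\ge0$, $y$ is a $(1+\epsilon)$--multiplicative approximation to $x$ if $x\le y<(1+\epsilon)x$; the $(f,\epsilon)$--estimation problem on $v\in\mathbb{Z}^n$ asks for such an approximation to $f(v)$. A stream of updates is a sequence $(i_j,\Delta_j)\in[n]\times\{-1,1\}$, accumulating into the frequency vector $v^{(j)}$ with $v^{(j)}_i=\sum_{j'\le j,\,i_{j'}=i}\Delta_{j'}$. An oblivious streaming algorithm is given $\epsilon$ and an upper bound $m$ on the stream length, processes $t\le m$ updates one by one, and then outputs a solution to the $(f,\epsilon)$--estimation problem on $v^{(t)}$. Such an algorithm with random seed $\rho$ is order--invariant if for any two streams $S_1,S_2$ of length at most $m$ that accumulate to the same frequency vector, and any seed $\rho$, its memory state after processing $S_1$ with seed $\rho$ equals its memory state after processing $S_2$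 with seed $\rho$. $\tau$--Stream Adversary Model (for a positive integer $\tau$): a game of $m$ rounds between an Adversary and an Algorithm; in each round the Adversary sends an update and the Algorithm replies with an estimate $y_j$. The Adversary has unlimited memory and may record the whole history, but before round 1 it fixes a first update and $\tau$ streams of $m-1$ updates each; in round 1 it sends the first update, and in each round $2,\dots,m$ it chooses (arbitrarily, based on all information so far including the latest estimate) one of the $\tau$ streams, removes its first remaining update and sends it. The Algorithm succeeds if for every $j\in[m]$, $y_j$ is a $(1+\epsilon)$--multiplicative approximation to $f(v^{(j)})$. *)

From HB Require Import structures.
From mathcomp Require Import all_boot all_order all_algebra.
From mathcomp Require Import reals exp.
Set Implicit Arguments. Unset Strict Implicit. Unset Printing Implicit Defensive.
Import Order.TTheory GRing.Theory Num.Theory.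
Local Open Scope ring_scope.

(* An update (i, Delta) with i in [n], Delta in {-1,1}: the boolean is
   true for Delta = +1 and false for Delta = -1. *)
Definition update (n : nat) := ('I_n * bool)%type.

Definition freq (n : nat) (s : seq (update n)) : {ffun 'I_n -> int} :=
  [ffun i => \sum_(u <- s | u.1 == i) (if u.2 then 1 else -1)].

Definition approx (R : realType) (eps x y : R) : bool :=
  (x <= y) && (y < (1 + eps) * x).

(* A (randomized) streaming algorithm: a finite seed space (uniform
   distribution), a finite memory-state space, an initial memory state
   determined by the seed, a deterministic update map on memory states and an
   estimate read off the memory state. *)
Record alg (R : realType) (n : nat) := Alg {
  seed : finType;
  state : finType;
  init : seed -> state;
  upd : state -> update n -> state;
  out : state -> R }.

Definition mem_bits (R : realType) (n : nat) (A : alg R n) : nat :=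
  up_log 2 #|state A|.

Definition run (R : realType) (n : nat) (A : alg R n) (rho : seed A)
  (s : seq (update n)) : state A :=
  foldl (@upd R n A) (init rho) s.

Definition Pr (R : realType) (n : nat) (A : alg R n) (P : pred (seed A)) : R :=
  #|[set rho | P rho]|%:R / #|seed A|%:R.

Definition order_invariant (R : realType) (n m : nat) (A : alg R n) : Prop :=
  forall (rho : seed A) (s1 s2 : seq (update n)),
    (size s1 <= m)%N -> (size s2 <= m)%N -> freq s1 = freq s2 ->
    run rho s1 = run rho s2.

Definition oblivious_correct (R : realType) (n m : nat)
  (f : {ffun 'I_n -> int} -> R) (eps delta : R) (A : alg R n) : Prop :=
  forall s : seq (update n), (size s <= m)%N ->
    1 - delta <= Pr (fun rho : seed A => approx eps (f (freq s)) (out (run rho s))).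

(* A (deterministic) adversary consists of a
   first update u0, tau streams of m-1 updates each, and a strategy choosing,
   based on the estimates received so far, which stream to advance next.
   [play_aux] produces the transcript of (update, estimate) pairs of the
   remaining k rounds, given the current memory state, the number of updates
   already consumed from each stream, and the estimates so far. *)
Fixpoint play_aux (R : realType) (n m tau : nat) (A : alg R n)
  (u0 : update n) (streams : 'I_tau -> (m.-1).-tuple (update n))
  (strat : seq R -> 'I_tau)
  (k : nat) (s : state A) (ptr : 'I_tau -> nat) (ys : seq R)
  : seq (update n * R) :=
  match k with
  | 0 => [::]
  | k'.+1 =>
      let i := strat ys in
      let u := nth u0 (streams i) (ptr i) in
      let s' := upd s u in
      let y := out s' in
      (u, y) :: play_aux u0 streams strat k' s'
                  (fun j => if j == i then (ptr j).+1 else ptr j) (rcons ys y)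
  end.

Definition transcript (R : realType) (n m tau : nat) (A : alg R n)
  (u0 : update n) (streams : 'I_tau -> (m.-1).-tuple (update n))
  (strat : seq R -> 'I_tau) (rho : seed A) : seq (update n * R) :=
  match m with
  | 0 => [::]
  | m'.+1 =>
      let s1 := upd (init rho) u0 in
      let y1 := out s1 in
      (u0, y1) :: play_aux u0 streams strat m' s1 (fun _ => 0%N) [:: y1]
  end.

Definition game_success (R : realType) (n : nat) (f : {ffun 'I_n -> int} -> R)
  (eps : R) (tr : seq (update n * R)) : bool :=
  all (fun j => approx eps (f (freq (take j.+1 (map fst tr))))
                            (nth 0 (map snd tr) j))
      (iota 0 (size tr)).

Definition robust (R : realType) (n m tau : nat) (f : {ffun 'I_n -> int} -> R)
  (eps delta : R) (A : alg R n) : Prop :=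
  forall (u0 : update n) (streams : 'I_tau -> (m.-1).-tuple (update n))
         (strat : seq R -> 'I_tau),
    1 - delta <= Pr (fun rho : seed A => game_success f eps (transcript u0 streams strat rho)).

From HB Require Import structures.
From mathcomp Require Import all_boot all_order all_algebra.
From mathcomp Require Import reals exp zify ring lra.
Set Implicit Arguments. Unset Strict Implicit. Unset Printing Implicit Defensive.
Import Order.TTheory GRing.Theory Num.Theory.
Local Open Scope ring_scope.

(* By order invariance, the memory state after any round of the tau-stream
   game only depends on how many updates have been consumed from each of the
   tau streams: it is the state reached on the canonical stream made of the
   first update followed by the consumed prefixes of the streams, in stream
   order.  There are at most m^tau such canonical streams, so by a union bound
   an oblivious algorithm with failure probability d is, with probability at
   least 1 - m^tau d, correct on all of them at once, and then it answers
   correctly against every adversary; take d = delta / m^tau.  For the second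
   bound, run 2t independent copies with failure probability 1/10 and output
   their median: on a fixed stream this fails only if t copies fail, which has
   probability at most 4^t 10^-t <= 2^-t, and t = O(tau log m + log(1/delta))
   makes this at most delta / m^tau. *)

Lemma card_bigcup_le (I T : finType) (P : pred I) (F : I -> {set T}) :
  (#|\bigcup_(i | P i) F i| <= \sum_(i | P i) #|F i|)%N.
Proof.
elim/big_rec2: _ => [|i k U _ le_Uk]; first by rewrite cards0.
by rewrite (leq_trans (leq_card_setU _ _)) ?leq_add2l.
Qed.

Lemma majorities_meet (T : finType) (P Q : pred T) :
  (#|T| < #|P| + #|Q|)%N -> exists x, P x && Q x.
Proof.
move=> lt_T_PQ; apply/existsP; apply: contraTT lt_T_PQ => /existsPn PQ0.
rewrite -leqNgt -(cardC Q) addnC leq_add2l; apply: subset_leq_card.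
by apply/subsetP => x Px; move: (PQ0 x); rewrite inE (Px : P x).
Qed.

Section Probability.
Variables (R : realType) (n : nat) (A : alg R n).
Implicit Types (P Q : pred (seed A)) (d : R).

Lemma Pr_ge1B P d : (0 < #|seed A|)%N ->
  (1 - d <= Pr P) = (#|[set rho | ~~ P rho]|%:R <= d * #|seed A|%:R).
Proof.
move=> N_gt0; have N_gt0' : (0 : R) < #|seed A|%:R by rewrite ltr0n.
have := cardsC [set rho | P rho].
have -> : ~: [set rho | P rho] = [set rho | ~~ P rho] by apply/setP => rho; rewrite !inE.
move=> /(congr1 (fun k => k%:R : R)); rewrite natrD => cardE.
rewrite /Pr ler_pdivlMr // mulrBl mul1r; apply/idP/idP; lra.
Qed.

Lemma seed_gt0 P d : d < 1 -> 1 - d <= Pr P -> (0 < #|seed A|)%N.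
Proof.
move=> d_lt1; rewrite /Pr lt0n; apply: contraTN => /eqP ->.
by rewrite invr0 mulr0 -ltNge subr_gt0.
Qed.

Lemma Pr_sub P Q : (forall rho, P rho -> Q rho) -> Pr P <= Pr Q.
Proof.
move=> PQ; rewrite /Pr ler_wpM2r ?invr_ge0 ?ler0n // ler_nat.
by apply: subset_leq_card; apply/subsetP => rho; rewrite !inE => /PQ.
Qed.

Lemma Pr_forall_ge (I : finType) (P : I -> pred (seed A)) d :
  (0 < #|seed A|)%N -> (forall i, 1 - d <= Pr (P i)) ->
  1 - #|I|%:R * d <= Pr (fun rho => [forall i, P i rho]).
Proof.
move=> N_gt0 PrP; rewrite Pr_ge1B //.
have -> : [set rho | ~~ [forall i, P i rho]] = \bigcup_i [set rho | ~~ P i rho].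
  apply/setP => rho; rewrite inE negb_forall.
  by apply/existsP/bigcupP => [[i Pi]|[i _ Pi]]; exists i; rewrite ?inE in Pi *.
apply: le_trans (_ : (\sum_i #|[set rho | ~~ P i rho]|)%:R <= _).
  by rewrite ler_nat card_bigcup_le.
rewrite natr_sum -mulrA mulr_natl -sumr_const.
by apply: ler_sum => i _; rewrite -Pr_ge1B.
Qed.

End Probability.

Section MergedPrefixes.
Variables (T : eqType) (tau : nat) (x0 : T) (ss : 'I_tau -> seq T).
Implicit Types (ptr : 'I_tau -> nat).

(* [x0] is both the first item and the [nth] default, as in [play_aux]. *)
Definition merged_prefixes ptr : seq T :=
  x0 :: flatten [seq mkseq (nth x0 (ss i)) (ptr i) | i <- enum 'I_tau].

Definition incr_at ptr i0 j : nat := if j == i0 then (ptr j).+1 else ptr j.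

Lemma eq_merged_prefixes ptr1 ptr2 :
  ptr1 =1 ptr2 -> merged_prefixes ptr1 = merged_prefixes ptr2.
Proof. by move=> eq_ptr; congr (_ :: flatten _); apply: eq_map => i; rewrite eq_ptr. Qed.

Lemma merged_prefixes0 : merged_prefixes (fun=> 0%N) = [:: x0].
Proof. by rewrite /merged_prefixes; elim: (enum _). Qed.

Lemma size_merged_prefixes ptr : size (merged_prefixes ptr) = (\sum_i ptr i).+1.
Proof.
rewrite /= size_flatten /shape -map_comp sumnE big_map big_enum /=.
by congr _.+1; apply: eq_bigr => i _; rewrite /= size_mkseq.
Qed.

Lemma sum_incr_at ptr i0 : (\sum_j incr_at ptr i0 j = (\sum_j ptr j).+1)%N.
Proof.
rewrite (bigD1 i0) //= [in RHS](bigD1 i0) //= /incr_at eqxx addSn.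
by congr (_ + _).+1; apply: eq_bigr => j /negPf ->.
Qed.

Lemma merged_prefixes_incr_at ptr i0 :
  perm_eq (merged_prefixes (incr_at ptr i0))
          (rcons (merged_prefixes ptr) (nth x0 (ss i0) (ptr i0))).
Proof.
apply/permP => a; rewrite -cats1 count_cat /= !count_flatten -!map_comp !sumnE !big_map.
rewrite -!enumT !big_enum /= (bigD1 i0) //= [in RHS](bigD1 i0) //= /incr_at eqxx.
rewrite mkseqS -cats1 count_cat /= addn0.
have -> : (\sum_(i | i != i0)
              count a (mkseq (nth x0 (ss i)) (if i == i0 then (ptr i).+1 else ptr i)) =
           \sum_(i | i != i0) count a (mkseq (nth x0 (ss i)) (ptr i)))%N.
  by apply: eq_bigr => j /negPf ->.
by rewrite -!addnA; do 2 congr (_ + _); apply: addnC.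
Qed.

End MergedPrefixes.

Lemma freq_perm n (s1 s2 : seq (update n)) : perm_eq s1 s2 -> freq s1 = freq s2.
Proof. by move=> s12; apply/ffunP => i; rewrite !ffunE; apply: perm_big. Qed.

Lemma run_rcons (R : realType) n (A : alg R n) (rho : seed A) s u :
  run rho (rcons s u) = upd (run rho s) u.
Proof. by rewrite /run foldl_rcons. Qed.

Lemma size_play_aux (R : realType) n m tau (A : alg R n) u0
    (streams : 'I_tau -> (m.-1).-tuple (update n)) strat k (st : state A) ptr ys :
  size (play_aux u0 streams strat k st ptr ys) = k.
Proof. by elim: k st ptr ys => //= k IHk st ptr ys; rewrite IHk. Qed.

Section Transcript.
Variables (R : realType) (n m tau : nat) (A : alg R n).
Variables (u0 : update n) (streams : 'I_tau -> (m.-1).-tuple (update n)).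
Variables (strat : seq R -> 'I_tau) (rho : seed A).

Lemma size_transcript : size (transcript u0 streams strat rho) = m.
Proof. by case: m streams => //= m' streams'; rewrite size_play_aux. Qed.

Lemma transcriptE : (0 < m)%N ->
  let st := upd (init rho) u0 in
  transcript u0 streams strat rho =
    (u0, out st) :: play_aux u0 streams strat m.-1 st (fun=> 0%N) [:: out st].
Proof. by case: m streams. Qed.

End Transcript.

Section Game.
Variables (R : realType) (n m tau : nat) (A : alg R n).
Variables (f : {ffun 'I_n -> int} -> R) (eps : R).
Variables (u0 : update n) (streams : 'I_tau -> (m.-1).-tuple (update n)).
Variable strat : seq R -> 'I_tau.

Local Notation stream_at := (merged_prefixes u0 (fun i => tval (streams i))).

Definition reachable (rho : seed A) (s : seq (update n)) (y : R) : Prop :=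
  y = out (run rho s) /\ exists2 ptr, perm_eq s (stream_at ptr) & (\sum_i ptr i < m)%N.

Lemma play_aux_reachable (rho : seed A) k st ptr ys h :
  st = run rho h -> perm_eq h (stream_at ptr) -> (\sum_i ptr i + k < m)%N ->
  let tr := play_aux u0 streams strat k st ptr ys in
  forall j, (j < size tr)%N ->
  reachable rho (h ++ take j.+1 (map fst tr)) (nth 0 (map snd tr) j).
Proof.
elim: k st ptr ys h => [//|k IHk] st ptr ys h -> h_ptr lt_ptr_m /= j.
set i := strat ys; set u := nth u0 (streams i) (ptr i).
have h_ptr' : perm_eq (rcons h u) (stream_at (incr_at ptr i)).
  by rewrite perm_sym (permPl (merged_prefixes_incr_at _ _ _ _)) -!cats1 perm_cat2r perm_sym.
have sum_ptr' := sum_incr_at ptr i.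
case: j => [_|j lt_j]; rewrite -cat_rcons.
  rewrite take0 cats0; split; first by rewrite run_rcons.
  by exists (incr_at ptr i); rewrite // sum_ptr'; lia.
by apply: IHk; rewrite ?run_rcons // sum_ptr'; lia.
Qed.

Lemma transcript_reachable (rho : seed A) j : (j < m)%N ->
  let tr := transcript u0 streams strat rho in
  reachable rho (take j.+1 (map fst tr)) (nth 0 (map snd tr) j).
Proof.
move=> lt_j_m; rewrite /= transcriptE ?(leq_ltn_trans _ lt_j_m) //.
case: j lt_j_m => [m_gt0|j lt_j_m].
  by rewrite /= take0; split=> //; exists (fun=> 0%N); rewrite ?merged_prefixes0 ?big1.
by apply: (play_aux_reachable (h := [:: u0]));
  rewrite ?merged_prefixes0 ?big1 ?add0n ?size_play_aux //; case: (m) lt_j_m.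
Qed.

(* Pointer vectors with sum < m have all entries < m, so the m^tau functions
   [c] below cover every canonical stream reachable in the game. *)
Definition good_seed (rho : seed A) : bool :=
  [forall c : {ffun 'I_tau -> 'I_m}, (\sum_i c i < m)%N ==>
     approx eps (f (freq (stream_at (fun i => c i))))
                (out (run rho (stream_at (fun i => c i))))].

Lemma approx_reachable (rho : seed A) s y :
  order_invariant m A -> good_seed rho -> reachable rho s y -> approx eps (f (freq s)) y.
Proof.
move=> oiA /forallP good_rho [-> [ptr s_ptr lt_ptr_m]].
have lt_ptr i : (ptr i < m)%N.
  by apply: leq_ltn_trans lt_ptr_m; rewrite (bigD1 i) //= leq_addr.
pose c := [ffun i => Ordinal (lt_ptr i)].
have c_ptr : stream_at (fun i => c i) = stream_at ptr.
  by apply: eq_merged_prefixes => i; rewrite ffunE.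
have sum_c : (\sum_i (c i : nat) = \sum_i ptr i)%N by apply: eq_bigr => i _; rewrite ffunE.
have size_s : size s = (\sum_i ptr i).+1 by rewrite (perm_size s_ptr) size_merged_prefixes.
have run_s : run rho s = run rho (stream_at ptr).
  by apply: oiA; rewrite ?size_s ?size_merged_prefixes ?(freq_perm s_ptr).
rewrite (freq_perm s_ptr) run_s.
by move: (good_rho c); rewrite c_ptr sum_c lt_ptr_m.
Qed.

Lemma game_success_good_seed (rho : seed A) :
  order_invariant m A -> good_seed rho ->
  game_success f eps (transcript u0 streams strat rho).
Proof.
move=> oiA good_rho; apply/allP => j; rewrite size_transcript mem_iota => /andP[_ lt_j].
exact: approx_reachable oiA good_rho (transcript_reachable rho lt_j).
Qed.

Lemma Pr_good_seed (d : R) :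
  oblivious_correct m f eps d A -> 0 <= d -> (0 < #|seed A|)%N ->
  1 - m%:R ^+ tau * d <= Pr good_seed.
Proof.
move=> ocA d_ge0 N_gt0.
have -> : m%:R ^+ tau = #|{ffun 'I_tau -> 'I_m}|%:R :> R by rewrite card_ffun !card_ord natrX.
apply: Pr_forall_ge => // c.
have [lt_c_m|_] := boolP (\sum_i c i < m)%N; last first.
  rewrite Pr_ge1B // (_ : [set rho | _] = set0) ?cards0 ?mulr_ge0 //.
have := ocA (stream_at (fun i => c i)); rewrite size_merged_prefixes => /(_ lt_c_m).
by move/le_trans; apply; apply: Pr_sub => rho.
Qed.

End Game.

Lemma robust_of_oblivious (R : realType) n m tau f (eps d delta : R) (A : alg R n) :
  order_invariant m A -> oblivious_correct m f eps d A -> 0 <= d < 1 ->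
  m%:R ^+ tau * d <= delta -> robust m tau f eps delta A.
Proof.
move=> oiA ocA /andP[d_ge0 d_lt1] le_d_delta u0 streams strat.
have N_gt0 := seed_gt0 d_lt1 (ocA [::] (leq0n m)).
have Pr_good := Pr_good_seed u0 streams ocA d_ge0 N_gt0.
apply: le_trans (le_trans _ Pr_good) (Pr_sub _) => [|rho]; first by rewrite lerD2l lerN2.
exact: game_success_good_seed.
Qed.

Section Median.
Variables (R : realType) (k : nat).
Implicit Types (y : 'I_k -> R).

Definition majority_below y i : bool := (k < 2 * #|[pred j | (y j <= y i)%R]|)%N.

Definition median y : R :=
  if [pick i | majority_below y i && [forall j, majority_below y j ==> (y i <= y j)%R]]
  is Some i then y i else 0.

Lemma medianP y g : majority_below y g ->
  exists i, [/\ median y = y i, majority_below y i & y i <= y g].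
Proof.
move=> maj_g; rewrite /median; case: pickP => [i /andP[maj_i /forallP min_i] | no_min].
  by exists i; split=> //; exact: implyP (min_i g) maj_g.
case: (arg_minP y maj_g) => i maj_i min_i.
by move: (no_min i); rewrite maj_i; move/negP; case; apply/forallP => j; apply/implyP/min_i.
Qed.

Lemma approx_median y (eps x : R) :
  (k < 2 * #|[pred i | approx eps x (y i)]|)%N -> approx eps x (median y).
Proof.
set G := [pred i | approx eps x (y i)] => maj_G.
have [g0 G_g0] : exists g0, g0 \in G.
  by apply/card_gt0P; rewrite -(ltn_pmul2l (isT : (0 < 2)%N)) muln0 (leq_ltn_trans _ maj_G).
case: (arg_maxP y G_g0) => g G_g max_g.
have maj_g : majority_below y g.
  apply: leq_trans maj_G _; rewrite leq_mul2l subset_leq_card ?orbT //.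
  by apply/subsetP => j /max_g; rewrite inE.
have [i [-> maj_i le_ig]] := medianP maj_g.
have /majorities_meet[j /andP[le_ji G_j]] :
    (#|'I_k| < #|[pred j | (y j <= y i)%R]| + #|G|)%N.
  by rewrite card_ord; move: maj_i maj_G; rewrite /majority_below; lia.
move: G_g G_j; rewrite !inE => /andP[_ lt_g] /andP[le_xj _].
by rewrite /approx (le_trans le_xj le_ji) (le_lt_trans le_ig lt_g).
Qed.

End Median.

Lemma card_ffun_in_on (T : finType) k (S : {set 'I_k}) (F : {set T}) :
  #|[set rho : {ffun 'I_k -> T} | [forall i in S, rho i \in F]]| =
  (#|F| ^ #|S| * #|T| ^ #|~: S|)%N.
Proof.
pose G i : pred T := [pred u | (i \in S) ==> (u \in F)].
have -> : #|[set rho : {ffun 'I_k -> T} | [forall i in S, rho i \in F]]| = #|family G|.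
  apply: eq_card => rho; rewrite inE.
  by apply/forallP/familyP => G_rho i; apply: G_rho.
rewrite card_family foldrE big_map big_enum /= (bigID (mem S)) /=.
rewrite -!prod_nat_const; congr (_ * _)%N.
  by apply: eq_bigr => i i_S; apply: eq_card => u; rewrite !inE i_S.
by apply: eq_big => i; rewrite ?inE // => /negPf i_S; apply: eq_card => u; rewrite !inE i_S.
Qed.

Lemma card_ffun_many_in (R : realType) (T : finType) (F : {set T}) k t (a : R) :
  0 <= a <= 1 -> #|F|%:R <= a * #|T|%:R ->
  #|[set rho : {ffun 'I_k -> T} | (t <= #|[set i | rho i \in F]|)%N]|%:R
    <= 2 ^+ k * a ^+ t * #|T|%:R ^+ k.
Proof.
move=> /andP[a_ge0 a_le1] F_le.
pose fam (S : {set 'I_k}) := [set rho : {ffun 'I_k -> T} | [forall i in S, rho i \in F]].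
have fam_le (S : {set 'I_k}) : (t <= #|S|)%N -> #|fam S|%:R <= a ^+ t * #|T|%:R ^+ k.
  move=> t_le_S; rewrite card_ffun_in_on natrM !natrX.
  apply: le_trans (_ : (a * #|T|%:R) ^+ #|S| * #|T|%:R ^+ #|~: S| <= _).
    by rewrite ler_wpM2r ?exprn_ge0 ?ler0n // lerXn2r ?nnegrE ?ler0n ?mulr_ge0.
  rewrite exprMn -mulrA -exprD cardsC card_ord ler_wpM2r ?exprn_ge0 ?ler0n //.
  exact: ler_wiXn2l.
have many_sub : [set rho : {ffun 'I_k -> T} | t <= #|[set i | rho i \in F]|]%N
    \subset \bigcup_(S : {set 'I_k} | (t <= #|S|)%N) fam S.
  apply/subsetP => rho; rewrite inE => t_le; apply/bigcupP.
  exists [set i | rho i \in F] => //.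
  by rewrite inE; apply/forallP => i; apply/implyP; rewrite inE.
apply: le_trans (_ : (\sum_(S : {set 'I_k} | (t <= #|S|)%N) #|fam S|)%:R <= _).
  by rewrite ler_nat (leq_trans (subset_leq_card many_sub)) ?card_bigcup_le.
rewrite natr_sum; apply: le_trans (_ : \sum_(S : {set 'I_k}) a ^+ t * #|T|%:R ^+ k <= _).
  rewrite [X in _ <= X](bigID (fun S : {set 'I_k} => t <= #|S|)%N) /= -[X in X <= _]addr0.
  apply: lerD; first by apply: ler_sum => S /fam_le.
  by apply: sumr_ge0 => S _; rewrite mulr_ge0 ?exprn_ge0 ?ler0n.
have card_sets : #|{set 'I_k}| = (2 ^ k)%N.
  by rewrite -cardsT -powersetT card_powerset cardsT card_ord.
by rewrite sumr_const card_sets -[X in X <= _]mulr_natl natrX mulrA.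
Qed.

Section Amplification.
Variables (R : realType) (n : nat).

Definition amplify (A : alg R n) (k : nat) : alg R n :=
  @Alg R n {ffun 'I_k -> seed A} {ffun 'I_k -> state A}
    (fun rho => [ffun i => init (rho i)])
    (fun st u => [ffun i => upd (st i) u])
    (fun st => median (fun i => out (st i))).

Lemma run_amplify (A : alg R n) k (rho : seed (amplify A k)) s :
  run rho s = [ffun i => run (rho i) s] :> state (amplify A k).
Proof.
suff foldlE st : foldl (@upd R n (amplify A k)) st s = [ffun i => foldl (@upd R n A) (st i) s].
  by rewrite /run foldlE; apply/ffunP => i; rewrite !ffunE.
elim: s st => [|u s IHs] st /=; first by apply/ffunP => i; rewrite ffunE.
by rewrite IHs; apply/ffunP => i; rewrite !ffunE.
Qed.

Lemma order_invariant_amplify m (A : alg R n) k :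
  order_invariant m A -> order_invariant m (amplify A k).
Proof.
move=> oiA rho s1 s2 s1_le s2_le freq12.
by rewrite !run_amplify; apply/ffunP => i; rewrite !ffunE (oiA _ s1 s2).
Qed.

Lemma mem_bits_amplify (A : alg R n) k : (mem_bits (amplify A k) <= k * mem_bits A)%N.
Proof.
rewrite /mem_bits /= card_ffun card_ord; apply: up_log_min => //.
by rewrite mulnC expnM; case: k => [|k] //; rewrite leq_exp2r // up_logP.
Qed.

Lemma oblivious_correct_amplify m f (eps a d : R) (A : alg R n) t :
  oblivious_correct m f eps a A -> 0 <= a < 1 -> (4 * a) ^+ t <= d ->
  oblivious_correct m f eps d (amplify A (2 * t)).
Proof.
move=> ocA /andP[a_ge0 a_lt1] le_d s s_le.
set x := f (freq s); set F := [set rho : seed A | ~~ approx eps x (out (run rho s))].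
have N_gt0 := seed_gt0 a_lt1 (ocA s s_le).
have card_seed : #|seed (amplify A (2 * t))| = (#|seed A| ^ (2 * t))%N.
  by rewrite card_ffun card_ord.
rewrite Pr_ge1B ?card_seed ?expn_gt0 ?N_gt0 //.
have F_le : #|F|%:R <= a * #|seed A|%:R by rewrite -Pr_ge1B ?ocA.
apply: le_trans (_ : #|[set rho : {ffun 'I_(2 * t) -> seed A} |
                         (t <= #|[set i | rho i \in F]|)%N]|%:R <= _).
  rewrite ler_nat subset_leq_card //; apply/subsetP => rho; rewrite !inE.
  apply: contraR; rewrite -ltnNge => lt_bad_t; rewrite run_amplify /=.
  set bad := [set i | rho i \in F] in lt_bad_t *.
  apply: approx_median.
  have -> : #|[pred i | approx eps x (out ([ffun i => run (rho i) s] i))]| = #|~: bad|.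
    by apply: eq_card => i; rewrite !inE ffunE negbK.
  by move: lt_bad_t (cardsC bad); rewrite card_ord; lia.
have a01 : 0 <= a <= 1 by rewrite a_ge0 ltW.
apply: le_trans (card_ffun_many_in (2 * t) t a01 F_le) _.
by rewrite natrX exprM -exprMn ler_wpM2r ?exprn_ge0 ?ler0n // -natrX.
Qed.

End Amplification.

Lemma ln2_ge_half (R : realType) : 2^-1 <= ln (2 : R).
Proof.
have := @le_ln1Dx R (- 2^-1); rewrite ltrN2 invf_lt1 ?ltr1n // => /(_ isT).
by rewrite (_ : 1 - 2^-1 = 2^-1) ?lnV ?posrE // ?lerN2 //; field.
Qed.

Lemma exists_pow2_ge (R : realType) (x : R) :
  1 <= x -> exists t : nat, x <= 2 ^+ t /\ t%:R <= 2 * ln x + 1.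
Proof.
move=> x_ge1; have lnx_ge0 := ln_ge0 x_ge1.
exists (Num.truncn (2 * ln x)).+1; split; last first.
  by rewrite -addn1 natrD lerD2r truncn_le mulr_ge0.
have x_gt0 : 0 < x := lt_le_trans ltr01 x_ge1.
rewrite -(ler_ln (x:=x)) ?posrE ?exprn_gt0 // lnXn // -[ln 2 *+ _]mulr_natr.
apply: le_trans (_ : 2^-1 * (Num.truncn (2 * ln x)).+1%:R <= _); last first.
  by rewrite ler_wpM2r ?ln2_ge_half.
have := truncnS_gt (2 * ln x); lra.
Qed.

Definition const_alg (R : realType) n : alg R n :=
  @Alg R n unit unit (fun=> tt) (fun _ _ => tt) (fun=> 0).

Lemma mem_bits_const_alg (R : realType) n : mem_bits (const_alg R n) = 0%N.
Proof. by rewrite /mem_bits /= card_unit. Qed.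

Lemma robust_const_alg (R : realType) n tau f (eps delta : R) :
  0 < delta -> robust 0 tau f eps delta (const_alg R n).
Proof.
move=> delta_gt0 u0 streams strat; rewrite Pr_ge1B ?card_unit //.
by rewrite (_ : [set rho | _] = set0) ?cards0 ?mulr_ge0 ?ltW //; apply/setP.
Qed.

Lemma delta_div_pow (R : realType) (delta : R) m tau :
  0 < delta < 1 -> (0 < m)%N ->
  let d := delta / m%:R ^+ tau in
  [/\ 0 < d < 1, m%:R ^+ tau * d = delta & ln d^-1 = tau%:R * ln m%:R + ln delta^-1].
Proof.
move=> /andP[delta_gt0 delta_lt1] m_gt0 d.
have m_pow_ge1 : 1 <= m%:R ^+ tau :> R by rewrite exprn_ege1 // ler1n.
have m_pow_gt0 : 0 < m%:R ^+ tau :> R := lt_le_trans ltr01 m_pow_ge1.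
split; last by rewrite /d invfM invrK lnM ?posrE ?invr_gt0 // lnXn ?ltr0n // addrC mulr_natl.
  rewrite divr_gt0 //=; apply: le_lt_trans delta_lt1.
  by rewrite ler_pdivrMr // ler_peMr // ltW.
by rewrite mulrC divfK ?gt_eqF.
Qed.

Lemma robust_amplify (R : realType) n m tau f (eps a d delta : R) (A : alg R n) :
  order_invariant m A -> oblivious_correct m f eps a A -> 0 <= a <= 8^-1 -> 0 < d < 1 ->
  m%:R ^+ tau * d <= delta ->
  exists2 k : nat, k%:R <= 4 * ln d^-1 + 2 & robust m tau f eps delta (amplify A k).
Proof.
move=> oiA ocA /andP[a_ge0 a_le] /andP[d_gt0 d_lt1] md_le.
have /exists_pow2_ge[t [dV_le t_le]] : 1 <= d^-1 by rewrite invf_ge1 // ltW.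
exists (2 * t)%N; first by rewrite natrM; lra.
apply: robust_of_oblivious (order_invariant_amplify oiA) _ _ md_le; last by rewrite ltW.
apply: oblivious_correct_amplify ocA _ _; first by rewrite a_ge0; lra.
apply: le_trans (_ : (2^-1) ^+ t <= _).
  by rewrite lerXn2r ?nnegrE ?invr_ge0 ?mulr_ge0 //; lra.
by rewrite exprVn -[d]invrK lef_pV2 ?posrE ?exprn_gt0 ?invr_gt0.
Qed.

Theorem lemma6p3 :
  exists C : nat,
  forall (R : realType) (n m : nat) (alpha : nat) (f : {ffun 'I_n -> int} -> R)
         (tau : nat) (A : R -> R -> alg R n) (M : R -> R -> nat),
    (2 <= alpha)%N ->
    (forall v, f v = 0 \/ (1 <= f v /\ f v <= alpha%:R)) ->
    (0 < tau)%N ->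
    (forall eps delta : R, 0 < eps < 1 -> 0 < delta < 1 ->
        order_invariant m (A eps delta) /\
        (mem_bits (A eps delta) <= M eps delta)%N /\
        oblivious_correct m f eps delta (A eps delta)) ->
    forall eps delta : R, 0 < eps < 1 -> 0 < delta < 1 ->
      (exists B : alg R n,
          (mem_bits B <= M eps (delta / (m%:R ^+ tau)))%N /\
          robust m tau f eps delta B) /\
      (exists B : alg R n,
          (mem_bits B)%:R <= C%:R * (tau%:R * ln (m%:R) + ln (delta^-1) + 1)
                                * (M eps (10^-1))%:R /\
          robust m tau f eps delta B).
Proof.
exists 4%N => R n m _ f tau A M _ _ _ hA eps delta eps01 delta01.
have /andP[delta_gt0 delta_lt1] := delta01.
have ln_delta_ge0 : 0 <= ln delta^-1 by rewrite ln_ge0 // invf_ge1 // ltW.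
(* For m = 0 the first bound is M eps 0, about which [hA] says nothing. *)
have [-> | m_gt0] := posnP m.
  have robust0 : robust 0 tau f eps delta (const_alg R n) by exact: robust_const_alg.
  split; exists (const_alg R n); rewrite mem_bits_const_alg; split=> //.
  by rewrite ln0 // mulr0 add0r !mulr_ge0 ?addr_ge0.
have [d01 md_eq ln_dV] := delta_div_pow tau delta01 m_gt0.
set d := delta / _ in d01 md_eq ln_dV *.
have md_le : m%:R ^+ tau * d <= delta by rewrite md_eq.
split.
  have [oiA [bitsA ocA]] := hA eps d eps01 d01.
  exists (A eps d); split=> //; apply: robust_of_oblivious oiA ocA _ md_le.
  by case/andP: d01 => /ltW -> ->.
have tenth01 : 0 < (10^-1 : R) < 1 by rewrite invr_gt0 ltr0n invf_lt1 ?ltr0n ?ltr1n.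
have [oiA [bitsA ocA]] := hA eps 10^-1 eps01 tenth01.
have tenth_le : 0 <= (10^-1 : R) <= 8^-1 by lra.
have [k k_le robustB] := robust_amplify oiA ocA tenth_le d01 md_le.
exists (amplify (A eps 10^-1) k); split=> //.
apply: le_trans (_ : (k * M eps 10^-1)%:R <= _).
  by rewrite ler_nat (leq_trans (mem_bits_amplify _ _)) // leq_mul2l bitsA orbT.
by rewrite natrM ler_wpM2r // -ln_dV; lra.
Qed.
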